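(* Let $M$ be a loopless matroid on a finite nonempty ground set $E$ with density $\rho=|E|/\operatorname{rank}(E)$. The following are equivalent: (1) the base polytope $P(M)$ contains the point $(\rho^{-1},\dots,\rho^{-1})$ in its relative interior; (2) $\rho(A)\le\rho(E)$ for all nonempty $A\subseteq E$, with strict inequality whenever $A$ is not a union of ground sets of connected components of $M$; (3) there exists a measure $\mu$ on the bases with $\mu(B)>0$ for every basis $B$ such that $\mu(\{B: B\ni e\})$ is the same for all $e\in E$.
   Context: $\operatorname{rank}(A)=\max_B|A\cap B|$ over bases $B$; $\rho(A)=|A|/\operatorname{rank}(A)$. $P(M)$ is the convex hull of the $0$–$1$ indicator vectors of bases. The direct sum of matroids on disjoint ground sets has as bases the unions of one basis from each. A matroid is connected if it is not a direct sum of two matroids on nonempty ground sets; every matroid decomposes uniquely as $M=\bigoplus_{i=1}^\ell M_i$ with each $M_i$ connected on $E_i$, $E=E_1\sqcup\dots\sqcup E_\ell$; these $M_i$ are the connected components. A matroid satisfying these conditions is called strictly uniformly dense. *)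

(* Matroids on a finite ground set T (the whole finType),
   given by their set of bases. *)
From HB Require Import structures.
From mathcomp Require Import all_boot all_order all_algebra.
From mathcomp Require Import reals.
Set Implicit Arguments. Unset Strict Implicit. Unset Printing Implicit Defensive.
Import Order.TTheory GRing.Theory Num.Theory.
Local Open Scope ring_scope.

Section Matroid.
Variable T : finType.
Variable bases : {set {set T}}.

Definition is_matroid : Prop :=
  bases != set0 /\
  forall B1 B2, B1 \in bases -> B2 \in bases -> forall x, x \in B1 :\: B2 ->
    exists2 y, y \in B2 :\: B1 & (y |: (B1 :\ x)) \in bases.

Definition loopless : Prop := forall e : T, exists2 B, B \in bases & e \in B.

Definition indep (I : {set T}) : bool := [exists B in bases, I \subset B].

Definition rank (A : {set T}) : nat := \max_(B in bases) #|A :&: B|.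

Definition density (R : realType) (A : {set T}) : R := #|A|%:R / (rank A)%:R.

Definition restr_basis (S X : {set T}) : bool :=
  [&& X \subset S, indep X &
      [forall Y : {set T}, (X \proper Y) && (Y \subset S) ==> ~~ indep Y]].

(* M|S is the direct sum M|S1 ⊕ M|(S\S1) *)
Definition restr_splits (S S1 : {set T}) : Prop :=
  forall X : {set T}, X \subset S ->
    (restr_basis S X = restr_basis S1 (X :&: S1) && restr_basis (S :\: S1) (X :&: (S :\: S1))).

Definition restr_connected (S : {set T}) : Prop :=
  forall S1 : {set T}, S1 \subset S -> S1 != set0 -> S :\: S1 != set0 -> ~ restr_splits S S1.

Definition component_decomposition (P : {set {set T}}) : Prop :=
  [/\ partition P [set: T],
      (forall X : {set T}, X \in bases = [forall S in P, restr_basis S (X :&: S)])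
    & forall S : {set T}, S \in P -> restr_connected S].

Definition union_of_components (A : {set T}) : Prop :=
  exists P : {set {set T}}, component_decomposition P /\ exists2 Q : {set {set T}}, Q \subset P & A = cover Q.

Section Polytope.
Variable R : realType.

Definition indicator (B : {set T}) (e : T) : R := (e \in B)%:R.

Definition in_base_polytope (x : T -> R) : Prop :=
  exists lam : {set T} -> R,
    [/\ forall B : {set T}, B \in bases -> 0 <= lam B,
        \sum_(B in bases) lam B = 1
      & forall e, x e = \sum_(B in bases) lam B * indicator B e].

Definition in_affine_hull (x : T -> R) : Prop :=
  exists lam : {set T} -> R,
    \sum_(B in bases) lam B = 1 /\
    forall e, x e = \sum_(B in bases) lam B * indicator B e.

(* relative interior: x in P(M) and some neighbourhood of x inside the affine
   hull (sup-norm ball; all norms on R^E are equivalent) lies in P(M) *)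
Definition in_rel_interior (x : T -> R) : Prop :=
  in_base_polytope x /\
  exists2 eps : R, 0 < eps &
    forall y, in_affine_hull y -> (forall e, `|y e - x e| < eps) -> in_base_polytope y.

Definition uniform_positive_measure : Prop :=
  exists mu : {set T} -> R,
    (forall B : {set T}, B \in bases -> 0 < mu B) /\
    forall e f : T, \sum_(B in bases | e \in B) mu B = \sum_(B in bases | f \in B) mu B.
End Polytope.
End Matroid.

From HB Require Import structures.
From mathcomp Require Import all_boot all_order all_algebra.
From mathcomp Require Import reals.
From mathcomp Require Import ring lra zify.
From Stdlib Require Import Classical.
Import Order.TTheory GRing.Theory Num.Theory.
Set Implicit Arguments. Unset Strict Implicit. Unset Printing Implicit Defensive.

(* Normalizing a uniform positive measure mu writes the constant point rho^-1
   as a convex combination of all bases with positive weights, i.e. as a point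
   of the relative interior of P(M), and conversely.  Double counting
   sum_e mu{B | e \in B} gives |A| r(E) <= |E| r(A), with equality only when
   every basis meets A in r(A) elements, i.e. when A is a separator, i.e. a
   union of components.  For the converse, by Farkas' lemma it suffices that
   no weight w : E -> R pairs nonnegatively with all the vectors
   |E| 1_B - r(E) and positively with one of them.  Along the order of w, the
   prefix sums of |E| 1_B - r(E) are |E| |S :&: B| - r(E) |S| over the
   sublevel sets S of w; for a greedy (minimum-weight) basis B this is
   |E| r(S) - r(E) |S| >= 0, so Abel summation forces all of them to vanish:
   every sublevel set is tight, hence a separator, so every basis has the same
   prefix sums and pairs with w to 0. *)

Ltac finset_cases :=
  rewrite ?eqxx;
  repeat match goal with
  | H : is_true (?x \in ?A) |- context [?x \in ?A] => rewrite H
  | H : is_true (?x \notin ?A) |- context [?x \in ?A] => rewrite (negbTE H)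
  | |- context [?x \in ?A] => case: (x \in A)
  | |- context [?x == ?y] => case: (x == y)
  end; by [].

Lemma card_setU1D1 (T : finType) (A : {set T}) x y :
  x \in A -> y \notin A -> #|y |: (A :\ x)| = #|A|.
Proof.
move=> xA yA; rewrite cardsU1 inE negb_and yA orbT (cardsD1 x A) xA.
by rewrite add1n.
Qed.

Section Separators.
Variables (T : finType) (bases : {set {set T}}).
Hypothesis matroid_bases : is_matroid bases.

Lemma basis_exchange B1 B2 x : B1 \in bases -> B2 \in bases -> x \in B1 :\: B2 ->
  exists2 y, y \in B2 :\: B1 & y |: (B1 :\ x) \in bases.
Proof. by move=> B1b B2b xD; case: matroid_bases => _ ex; apply: ex B1b B2b x xD. Qed.

Lemma exists_basis : exists B, B \in bases.
Proof. by case: matroid_bases => /set0Pn. Qed.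

Lemma card_bases B1 B2 : B1 \in bases -> B2 \in bases -> #|B1| = #|B2|.
Proof.
move=> B1b B2b; have [k] := ubnP #|B1 :\: B2|.
elim: k B1 B1b => // k IH B1 B1b; rewrite ltnS => leDk.
case: (set_0Vmem (B1 :\: B2)) => [D0 | [x x12]].
- have sB12 : B1 \subset B2 by rewrite -setD_eq0 D0.
  suff -> : B1 = B2 by [].
  apply/eqP; rewrite eqEsubset sB12; apply/subsetP => x xB2; apply/negPn/negP => xB1.
  have x21 : x \in B2 :\: B1 by rewrite inE xB1.
  have [y] := basis_exchange B2b B1b x21.
  by rewrite inE => /andP[/negP yB2 /(subsetP sB12)].
- have [y y21 B'b] := basis_exchange B1b B2b x12.
  move: x12 y21; rewrite !inE => /andP[xB2 xB1] /andP[yB1 yB2].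
  rewrite -(card_setU1D1 xB1 yB1) (IH _ B'b) //.
  have -> : (y |: (B1 :\ x)) :\: B2 = (B1 :\: B2) :\ x.
    by apply/setP => z; rewrite !inE; case: (z =P y) => [->|_]; finset_cases.
  by rewrite (cardsD1 x) !inE xB2 xB1 in leDk.
Qed.

Lemma leq_card_rank A B : B \in bases -> #|A :&: B| <= rank bases A.
Proof. exact: (@leq_bigmax_cond _ (mem bases) (fun B => #|A :&: B|) B). Qed.

Lemma rank_attained A : exists2 B, B \in bases & rank bases A = #|A :&: B|.
Proof.
have [B0 B0b] := exists_basis.
have bases_gt0 : 0 < #|bases| by apply/card_gt0P; exists B0.
by have [B] := eq_bigmax_cond (fun B => #|A :&: B|) bases_gt0; exists B.
Qed.

(* Equivalently r(A) + r(E \ A) = r(E): the usual notion of separator. *)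
Definition separator (A : {set T}) : bool :=
  [forall B1 in bases, forall B2 in bases, #|B1 :&: A| == #|B2 :&: A|].

Lemma separatorP A :
  reflect {in bases &, forall B1 B2, #|B1 :&: A| = #|B2 :&: A|} (separator A).
Proof.
apply: (iffP forall_inP) => [sepA B1 B2 B1b B2b | sepA B1 B1b].
  by have /forall_inP/(_ _ B2b)/eqP := sepA _ B1b.
by apply/forall_inP => B2 B2b; rewrite (sepA _ _ B1b B2b).
Qed.

Lemma separator_rank A B : separator A -> B \in bases -> #|B :&: A| = rank bases A.
Proof.
move=> /separatorP sepA Bb; have [B' B'b ->] := rank_attained A.
by rewrite (sepA _ _ Bb B'b) setIC.
Qed.

Lemma separator_mix A B1 B2 : separator A -> B1 \in bases -> B2 \in bases ->
  (B1 :&: A) :|: (B2 :\: A) \in bases.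
Proof.
move=> sepA B1b B2b; have [k] := ubnP #|(B1 :\: A) :\: B2|.
elim: k B1 B1b => // k IH B1 B1b; rewrite ltnS => leDk.
case: (set_0Vmem ((B1 :\: A) :\: B2)) => [D0 | [x xD]].
- have subD : B1 :\: A \subset B2 :\: A.
    apply/subsetP => z zD; move/setP/(_ z): D0; move: zD.
    by rewrite !inE; finset_cases.
  have : #|B1 :&: A| + #|B1 :\: A| = #|B2 :&: A| + #|B2 :\: A|.
    by rewrite !cardsID (card_bases B1b B2b).
  rewrite (separatorP _ sepA _ _ B1b B2b) => /addnI eqD.
  have /eqP <- : B1 :\: A == B2 :\: A by rewrite eqEcard subD eqD /=.
  by rewrite setID.
- have x12 : x \in B1 :\: B2 by move: xD; rewrite !inE => /and3P[-> _ ->].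
  have [y y21 B'b] := basis_exchange B1b B2b x12.
  move: xD y21; rewrite !inE => /and3P[xB2 xA xB1] /andP[yB1 yB2].
  have yA : y \notin A.
    apply/negP => yA; move/separatorP: sepA => /(_ _ _ B'b B1b).
    have -> : (y |: (B1 :\ x)) :&: A = y |: (B1 :&: A).
      apply/setP => z; rewrite !inE.
      by case: (z =P y) => [->|_]; last case: (z =P x) => [->|_]; finset_cases.
    by rewrite cardsU1 inE (negbTE yB1) add1n => /esym/n_Sn.
  have -> : B1 :&: A = (y |: (B1 :\ x)) :&: A.
    apply/setP => z; rewrite !inE.
    by case: (z =P y) => [->|_]; last case: (z =P x) => [->|_]; finset_cases.
  apply: IH B'b _; move: leDk; rewrite (cardsD1 x) !inE xB2 xA xB1 add1n.
  apply: leq_trans; rewrite ltnS subset_leq_card //; apply/subsetP => z.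
  rewrite !inE.
  by case: (z =P y) => [->|_]; last case: (z =P x) => [->|_]; finset_cases.
Qed.

Lemma separatorT : separator [set: T].
Proof. by apply/separatorP => B1 B2 B1b B2b; rewrite !setIT (card_bases B1b B2b). Qed.

Lemma separator0 : separator set0.
Proof. by apply/separatorP => B1 B2 _ _; rewrite !setI0. Qed.

Lemma separatorC A : separator A -> separator (~: A).
Proof.
move=> /separatorP sepA; apply/separatorP => B1 B2 B1b B2b.
apply/eqP; rewrite -(eqn_add2l #|B1 :&: A|) {2}(sepA _ _ B1b B2b) -!setDE !cardsID.
by rewrite (card_bases B1b B2b).
Qed.

Lemma separatorI A A' : separator A -> separator A' -> separator (A :&: A').
Proof.
move=> sepA sepA'; apply/separatorP => B1 B2 B1b B2b.
have Xb := separator_mix sepA B1b B2b.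
have Yb := separator_mix sepA' Xb B2b.
set Y := (_ :&: A') :|: _ in Yb.
have -> : B1 :&: (A :&: A') = Y :&: (A :&: A') by apply/setP => z; rewrite !inE; finset_cases.
apply/eqP; rewrite -(eqn_add2r #|B2 :\: (A :&: A')|) cardsID.
have -> : B2 :\: (A :&: A') = Y :\: (A :&: A') by apply/setP => z; rewrite !inE; finset_cases.
by rewrite cardsID (card_bases Yb B2b).
Qed.

Lemma separatorU A A' : separator A -> separator A' -> separator (A :|: A').
Proof.
move=> sepA sepA'; rewrite -(setCK (A :|: A')) setCU.
by apply/separatorC/separatorI; apply: separatorC.
Qed.

Lemma separator_restr_basis S B : separator S -> B \in bases ->
  restr_basis bases S (B :&: S).
Proof.
move=> /separatorP sepS Bb; apply/and3P; split; first exact: subsetIr.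
  by apply/existsP; exists B; rewrite Bb subsetIl.
apply/forallP => Y; apply/implyP => /andP[ltBY sYS].
apply/existsP => -[B' /andP[B'b sYB']].
have := leq_trans (proper_card ltBY) (subset_leq_card (_ : Y \subset B' :&: S)).
by rewrite (sepS _ _ Bb B'b) ltnn subsetI sYB' sYS => /(_ isT).
Qed.

Lemma restr_basis_meet S X : restr_basis bases S X ->
  exists2 B, B \in bases & X = B :&: S.
Proof.
move=> /and3P[sXS /existsP[B /andP[Bb sXB]] maxX]; exists B => //.
apply/eqP; rewrite eqEproper subsetI sXS sXB /=; apply/negP => ltX.
move/forallP: maxX => /(_ (B :&: S)); rewrite ltX subsetIr /= => /negP; apply.
by apply/existsP; exists B; rewrite Bb subsetIl.
Qed.

Lemma card_restr_basis S X : separator S -> restr_basis bases S X -> #|X| = rank bases S.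
Proof.
by move=> sepS /restr_basis_meet[B Bb ->]; rewrite (separator_rank sepS Bb).
Qed.

End Separators.

Lemma card_split (T : finType) (Y S S1 : {set T}) :
  Y \subset S -> #|Y| = #|Y :&: S1| + #|Y :&: (S :\: S1)|.
Proof. by move=> sYS; rewrite -(cardsID S1 Y) !setDE setIA (setIidPl sYS). Qed.

Section Components.
Variables (T : finType) (bases : {set {set T}}).
Hypothesis matroid_bases : is_matroid bases.
Local Notation separator := (separator bases).

Definition component (e : T) : {set T} := \bigcap_(A | separator A && (e \in A)) A.

Definition components : {set {set T}} := [set component e | e : T].

Lemma mem_component e : e \in component e.
Proof. by apply/bigcapP => A /andP[]. Qed.

Lemma separator_component e : separator (component e).
Proof.
apply: (big_ind separator); first exact: separatorT.
  exact: separatorI.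
by move=> A /andP[].
Qed.

Lemma sub_component A e : separator A -> e \in A -> component e \subset A.
Proof. by move=> sepA eA; apply: bigcap_inf; rewrite sepA eA. Qed.

Lemma component_sym e f : f \in component e -> component f = component e.
Proof.
move=> fe; apply/eqP; rewrite eqEsubset sub_component ?separator_component //=.
apply: sub_component (separator_component f) _; apply/negPn/negP => ef.
have ecf : e \in ~: component f by rewrite inE ef.
have /subsetP/(_ f fe) := sub_component (separatorC matroid_bases (separator_component f)) ecf.
by rewrite inE mem_component.
Qed.

Lemma components_partition : partition components [set: T].
Proof.
apply/and3P; split.
- apply/eqP/setP => z; rewrite inE; apply/bigcupP.
  by exists (component z); [apply: imset_f | exact: mem_component].
- apply/trivIsetP => _ _ /imsetP[e _ ->] /imsetP[f _ ->] ne_ef.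
  rewrite -setI_eq0; apply/set0Pn => -[g]; rewrite inE => /andP[ge gf].
  by move: ne_ef; rewrite -(component_sym ge) -(component_sym gf) eqxx.
- by apply/imsetP => -[e _ e0]; have := mem_component e; rewrite -e0 inE.
Qed.

Lemma components_bases X :
  (X \in bases) = [forall S in components, restr_basis bases S (X :&: S)].
Proof.
apply/idP/forall_inP => [Xb _ /imsetP[e _ ->] | restrX].
  exact: separator_restr_basis (separator_component e) Xb.
have glue (s : seq {set T}) : {subset s <= components} ->
    exists2 Y, Y \in bases & Y :&: \bigcup_(S <- s) S = X :&: \bigcup_(S <- s) S.
  elim: s => [_ | S s IH sc].
    by have [B Bb] := exists_basis matroid_bases; exists B; rewrite // big_nil !setI0.
  have [Y Yb eY] : exists2 Y, Y \in bases &
      Y :&: \bigcup_(S' <- s) S' = X :&: \bigcup_(S' <- s) S'.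
    by apply: IH => S' S's; apply: sc; rewrite inE S's orbT.
  have /imsetP[e _ eS] := sc S (mem_head S s).
  have sepS : separator S by rewrite eS separator_component.
  have [B Bb eB] := restr_basis_meet (restrX S (sc S (mem_head S s))).
  exists ((B :&: S) :|: (Y :\: S)); first exact: separator_mix.
  rewrite big_cons; apply/setP => z; move/setP/(_ z): eY; move/setP/(_ z): eB.
  by rewrite !inE; finset_cases.
have [|Y Yb] := glue (enum components); first by move=> S; rewrite mem_enum.
have coverE : \bigcup_(S in components) S = [set: T].
  by case/and3P: components_partition => /eqP.
by rewrite big_enum /= coverE !setIT => <-.
Qed.

Lemma split_separator (S S1 : {set T}) : separator S -> S1 \subset S ->
  restr_splits bases S S1 -> separator S1.
Proof.
move=> sepS sS1S splitS; apply/separatorP => B1 B2 B1b B2b.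
set X := (B2 :&: S1) :|: (B1 :&: (S :\: S1)).
have sXS : X \subset S.
  by apply/subsetP => z; have := subsetP sS1S z; rewrite !inE; finset_cases.
have XS1 : X :&: S1 = (B2 :&: S) :&: S1.
  by rewrite -setIA (setIidPr sS1S); apply/setP => z; rewrite !inE; finset_cases.
have XSS1 : X :&: (S :\: S1) = (B1 :&: S) :&: (S :\: S1).
  by rewrite -setIA (setIidPr (subsetDl S S1)); apply/setP => z; rewrite !inE; finset_cases.
have restrB B : B \in bases -> restr_basis bases S1 (B :&: S :&: S1) &&
    restr_basis bases (S :\: S1) (B :&: S :&: (S :\: S1)).
  by move=> Bb; rewrite -splitS ?subsetIr // separator_restr_basis.
have restrX : restr_basis bases S X.
  rewrite splitS // XS1 XSS1.
  by case/andP: (restrB _ B2b) => -> _; case/andP: (restrB _ B1b).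
have := card_restr_basis matroid_bases sepS restrX.
rewrite -(separator_rank matroid_bases sepS B1b) (card_split S1 sXS).
rewrite [#|B1 :&: S|](card_split S1 (subsetIr B1 S)) XS1 XSS1.
by rewrite -!setIA (setIidPr sS1S) => /addIn.
Qed.

Lemma components_connected S : S \in components -> restr_connected bases S.
Proof.
case/imsetP => e _ -> S1 sS1 /set0Pn[f fS1] neS1 splitS.
have sepS1 := split_separator (separator_component e) sS1 splitS.
move/negP: neS1; apply; rewrite setD_eq0.
by rewrite -(component_sym (subsetP sS1 f fS1)) sub_component.
Qed.

Lemma components_decomposition : component_decomposition bases components.
Proof.
split; [exact: components_partition | exact: components_bases | exact: components_connected].
Qed.

Lemma decomposition_part_separator P S :
  component_decomposition bases P -> S \in P -> separator S.
Proof.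
case=> /and3P[_ trivP _] basesP _ SP; apply/separatorP => B B' Bb B'b.
set X := (B' :&: S) :|: (B :\: S).
have XS : X :&: S = B' :&: S by apply/setP => z; rewrite !inE; finset_cases.
have XDS : X :\: S = B :\: S by apply/setP => z; rewrite !inE; finset_cases.
have Xb : X \in bases.
  rewrite basesP; apply/forall_inP => S' S'P.
  have [-> | neS] := eqVneq S' S.
    by rewrite XS; move: B'b; rewrite basesP => /forall_inP; apply.
  have /eqP/setP dS : S' :&: S == set0 by rewrite setI_eq0; apply: (trivIsetP trivP).
  have -> : X :&: S' = B :&: S'.
    by apply/setP => z; move: (dS z); rewrite !inE; finset_cases.
  by move: Bb; rewrite basesP => /forall_inP; apply.
apply/eqP; rewrite -(eqn_add2r #|B :\: S|) cardsID -(card_bases matroid_bases Xb Bb).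
by rewrite -(cardsID S X) XS XDS.
Qed.

Lemma separator_components A : separator A <-> union_of_components bases A.
Proof.
split=> [sepA | [P [decP [Q sQP ->]]]].
  exists components; split; first exact: components_decomposition.
  exists [set component e | e in A].
    by apply/subsetP => _ /imsetP[e _ ->]; apply: imset_f.
  apply/setP => z; apply/idP/bigcupP => [zA | [_ /imsetP[e eA ->]]].
    by exists (component z); [apply: imset_f | exact: mem_component].
  by apply/subsetP; apply: sub_component.
apply: (big_ind separator); [exact: separator0 | exact: separatorU | ].
by move=> S SQ; apply: decomposition_part_separator decP (subsetP sQP S SQ).
Qed.

End Components.

Section Greedy.
Variables (T : finType) (bases : {set {set T}}).
Hypothesis matroid_bases : is_matroid bases.

Lemma basis_augment S B B' : B \in bases -> B' \in bases -> #|S :&: B| < #|S :&: B'| ->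
  exists x y, [/\ x \in B :\: S, y \in S :\: B & y |: (B :\ x) \in bases].
Proof.
move=> Bb B'b ltSB.
pose better B'' := (B'' \in bases) && (#|S :&: B| < #|S :&: B''|).
have better_B' : better B' by rewrite /better B'b ltSB.
case: (arg_minnP (fun B'' => #|B :\: B''|) better_B') => {B' B'b ltSB better_B'}.
move=> B' /andP[B'b ltSB] minB'.
have newS y : y \in B' -> y \notin B -> y \in S.
  move=> yB' yB; apply/negPn/negP => yS.
  have yB'B : y \in B' :\: B by rewrite inE yB yB'.
  have [z] := basis_exchange matroid_bases B'b Bb yB'B.
  rewrite inE => /andP[zB' zB] B''b.
  have : better (z |: (B' :\ y)).
    rewrite /better B''b; apply: (leq_trans ltSB); apply: subset_leq_card.
    by apply/subsetP => u; rewrite !inE; case: (u =P y) => [->|_]; finset_cases.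
  move/minB'; rewrite (cardsD1 z (B :\: B')) !inE zB zB' add1n ltnNge => /negP; apply.
  apply: subset_leq_card; apply/subsetP => u.
  by rewrite !inE; case: (u =P z) => [->|_]; last case: (u =P y) => [->|_]; finset_cases.
have [x xBB' xS] : exists2 x, x \in B :\: B' & x \notin S.
  apply/exists_inP; rewrite -negb_forall_in; apply/negP => /forall_inP BB'S.
  have : #|B :\: S| <= #|B' :\: S|.
    apply: subset_leq_card; apply/subsetP => u; rewrite !inE => /andP[uS uB].
    rewrite uS /=; apply/negPn/negP => uB'.
    by move: (BB'S u); rewrite !inE uB uB' (negbTE uS) => /(_ isT).
  have := cardsID S B; have := cardsID S B'.
  by rewrite (card_bases matroid_bases Bb B'b) ![_ :&: S]setIC; move: ltSB; lia.
have [y yB'B B'b'] := basis_exchange matroid_bases Bb B'b xBB'.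
exists x, y; split=> //; first by move: xBB'; rewrite !inE xS => /andP[_ ->].
by move: yB'B; rewrite !inE => /andP[yB yB']; rewrite yB newS.
Qed.

Local Open Scope ring_scope.

Lemma greedy_basis (R : realDomainType) (w : T -> R) : exists2 B, B \in bases &
  forall t : R, #|[set e | w e <= t] :&: B| = rank bases [set e | w e <= t].
Proof.
have [B0 B0b] := exists_basis matroid_bases.
case: (arg_minP (fun B : {set T} => \sum_(e in B) w e) B0b) => B Bb minB.
exists B => // t; apply/eqP; rewrite eqn_leq leq_card_rank //=.
have [B' B'b ->] := rank_attained matroid_bases [set e | w e <= t].
rewrite leqNgt; apply/negP => /(basis_augment Bb B'b)[x [y [xB yB B''b]]].
move: xB yB; rewrite !inE -ltNge => /andP[wx xB] /andP[yB wy].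
have := minB _ B''b; rewrite big_setU1 ?(big_setD1 x xB) /=.
  by rewrite lerD2r leNgt (le_lt_trans wy wx).
by rewrite !inE negb_and yB orbT.
Qed.

End Greedy.

Local Open Scope ring_scope.

Section AbelSummation.
Variables (R : realDomainType) (T : finType) (h w : T -> R).

Lemma abel_summation_bounded (D : {set T}) (c : R) :
  (forall e, e \in D -> w e <= c) ->
  (forall f, f \in D -> 0 <= \sum_(e in D | w e <= w f) h e) ->
  \sum_(e in D) h e * (w e - c) <= 0 /\
  (\sum_(e in D) h e * (w e - c) = 0 ->
     forall f, f \in D -> w f < c -> \sum_(e in D | w e <= w f) h e = 0).
Proof.
have [k] := ubnP #|D|; elim: k D c => // k IH D c cardD wc prefix_ge0.
have [D0 | [f0 f0D]] := set_0Vmem D.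
  by rewrite D0 big_set0; split=> // _ f; rewrite inE.
have [f1 f1D maxf1] : exists2 f1, f1 \in D & forall e, e \in D -> w e <= w f1.
  by case: (arg_maxP w f0D) => f1 f1D maxf1; exists f1.
pose D' := [set e in D | w e < w f1].
have prefixD' f : f \in D' ->
    \sum_(e in D' | w e <= w f) h e = \sum_(e in D | w e <= w f) h e.
  rewrite inE => /andP[_ wf]; apply: eq_bigl => e; rewrite inE.
  case: (leP (w e) (w f)) => wef; last by rewrite !andbF.
  by rewrite (le_lt_trans wef wf) !andbT.
have D'D : D' \proper D.
  apply/properP; split; first by apply/subsetP => e; rewrite inE => /andP[].
  by exists f1; rewrite // inE ltxx andbF.
have cardD' : (#|D'| < k)%N by have := proper_card D'D; lia.
have wD' e : e \in D' -> w e <= w f1 by rewrite inE => /andP[_ /ltW].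
have prefixD'_ge0 f : f \in D' -> 0 <= \sum_(e in D' | w e <= w f) h e.
  by move=> f'; rewrite prefixD' //; apply: prefix_ge0; move: f'; rewrite inE => /andP[].
have [IH1 IH2] := IH D' (w f1) cardD' wD' prefixD'_ge0.
have sumD : \sum_(e in D) h e * (w e - c) =
    \sum_(e in D') h e * (w e - w f1) + (w f1 - c) * \sum_(e in D) h e.
  have -> : \sum_(e in D) h e * (w e - c) =
      \sum_(e in D) h e * (w e - w f1) + (w f1 - c) * \sum_(e in D) h e.
    by rewrite mulr_sumr -big_split /=; apply: eq_bigr => e _; ring.
  congr (_ + _); rewrite (bigID (fun e => w e < w f1)) /= addrC big1 ?add0r.
    by apply: eq_bigl => e; rewrite inE.
  move=> e /andP[eD]; rewrite -leNgt => wf1e.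
  suff -> : w e = w f1 by rewrite subrr mulr0.
  by apply/eqP; rewrite eq_le maxf1.
have sum_prefix f : f \in D -> w f1 <= w f ->
    \sum_(e in D | w e <= w f) h e = \sum_(e in D) h e.
  move=> fD wf1f; apply: eq_bigl => e; case eD : (e \in D) => //=.
  exact: le_trans (maxf1 e eD) wf1f.
have hD_ge0 : 0 <= \sum_(e in D) h e by rewrite -(sum_prefix f1) ?prefix_ge0.
have wf1c : w f1 - c <= 0 by rewrite subr_le0 wc.
have tail_le0 : (w f1 - c) * \sum_(e in D) h e <= 0 by rewrite mulr_le0_ge0.
rewrite sumD; split=> [|sum0 f fD wfc]; first lra.
case: (ltP (w f) (w f1)) => wff1.
  by rewrite -prefixD' ?IH2 ?inE ?fD //; lra.
have : (w f1 - c) * \sum_(e in D) h e = 0 by lra.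
move/eqP; rewrite mulf_eq0 subr_eq0 (lt_eqF (le_lt_trans wff1 wfc)) /=.
by rewrite sum_prefix // => /eqP.
Qed.

Lemma abel_summation : \sum_e h e = 0 ->
  (forall f, 0 <= \sum_(e | w e <= w f) h e) ->
  \sum_e h e * w e <= 0 /\
  (\sum_e h e * w e = 0 -> forall f, \sum_(e | w e <= w f) h e = 0).
Proof.
move=> h0 prefix_ge0; pose c := 1 + \sum_e `|w e|.
have wc e : w e < c.
  have : w e <= \sum_e `|w e|.
    by rewrite (bigD1 e) //= (le_trans (ler_norm _)) // lerDl sumr_ge0.
  rewrite /c; lra.
have prefixT f : \sum_(e in [set: T] | w e <= w f) h e = \sum_(e | w e <= w f) h e.
  by apply: eq_bigl => e; rewrite inE.
have sumT : \sum_(e in [set: T]) h e * (w e - c) = \sum_e h e * w e.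
  rewrite (eq_bigl xpredT) => [|e]; last by rewrite inE.
  by under eq_bigr do rewrite mulrBr; rewrite sumrB -mulr_suml h0 mul0r subr0.
have [] := @abel_summation_bounded [set: T] c (fun e _ => ltW (wc e)).
  by move=> f _; rewrite prefixT.
by rewrite sumT => le0 eq0; split=> // sum0 f; rewrite -prefixT eq0 ?inE.
Qed.

End AbelSummation.

Section Farkas.
Variables (R : realFieldType) (T : finType).

Definition dot (a x : T -> R) : R := \sum_e a e * x e.

Lemma dot_subl (a b x : T -> R) k :
  dot (fun e => a e - k * b e) x = dot a x - k * dot b x.
Proof. by rewrite /dot mulr_sumr -sumrB; apply: eq_bigr => e _; ring. Qed.

Lemma dot_subr (a x y : T -> R) k :
  dot a (fun e => x e - k * y e) = dot a x - k * dot a y.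
Proof. by rewrite /dot mulr_sumr -sumrB; apply: eq_bigr => e _; ring. Qed.

(* Fourier-Motzkin elimination of the first vector of [s]. *)
Lemma farkas_lemma (I : eqType) (s : seq I) (a : I -> T -> R) (b : T -> R) : uniq s ->
  (exists x, (forall i, i \in s -> 0 <= dot (a i) x) /\ dot b x < 0) \/
  (exists c : I -> R, (forall i, i \in s -> 0 <= c i) /\
     forall e, b e = \sum_(i <- s) c i * a i e).
Proof.
elim: s a b => [|i0 s IH] a b.
  move=> _; case: (boolP [forall e, b e == 0]) => [/forallP b0 | /forallPn[e be]].
    by right; exists (fun _ => 0); split=> // e; rewrite big_nil; apply/eqP.
  left; exists (fun e' => if e' == e then - b e else 0); split=> //.
  rewrite /dot (bigD1 e) //= eqxx big1 ?addr0 => [|e' /negbTE ->]; last by rewrite mulr0.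
  by rewrite mulrN oppr_lt0 -expr2 lt_def sqr_ge0 expf_neq0.
rewrite cons_uniq => /andP[i0s uniq_s].
have mem_cons i : i \in i0 :: s -> i = i0 \/ i \in s by rewrite inE => /orP[/eqP|]; [left|right].
have sum_s (c : I -> R) c0 e :
    \sum_(i <- s) (if i == i0 then c0 else c i) * a i e = \sum_(i <- s) c i * a i e.
  by apply: eq_big_seq => i i_s; case: (i =P i0) => // ii0; move: i0s; rewrite -ii0 i_s.
have [[x [ax_ge0 bx_lt0]] | [c [c_ge0 bc]]] := IH a b uniq_s; last first.
  right; exists (fun i => if i == i0 then 0 else c i); split.
    by move=> i /mem_cons[->|i_s]; rewrite ?eqxx //; case: eqP => // _; apply: c_ge0.
  by move=> e; rewrite big_cons eqxx mul0r add0r sum_s bc.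
have [a0x_ge0 | a0x_lt0] := leP 0 (dot (a i0) x).
  by left; exists x; split=> // i /mem_cons[->|]; last apply: ax_ge0.
set al := dot (a i0) x; have al_neq0 : al != 0 by rewrite lt_eqF.
pose a' i e := a i e - (dot (a i) x / al) * a i0 e.
pose b' e := b e - (dot b x / al) * a i0 e.
have [[y [a'y_ge0 b'y_lt0]] | [c [c_ge0 b'c]]] := IH a' b' uniq_s.
  left; exists (fun e => y e - (dot (a i0) y / al) * x e); split.
    move=> i /mem_cons[->|i_s]; first by rewrite dot_subr -/al divfK // subrr.
    move: (a'y_ge0 i i_s); rewrite /a' dot_subl dot_subr.
    suff -> : dot (a i0) y / al * dot (a i) x = dot (a i) x / al * dot (a i0) y by [].
    ring.
  move: b'y_lt0; rewrite /b' dot_subl dot_subr.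
  suff -> : dot (a i0) y / al * dot b x = dot b x / al * dot (a i0) y by [].
  ring.
right; set S := \sum_(i <- s) c i * dot (a i) x.
have S_ge0 : 0 <= S.
  by rewrite /S big_seq sumr_ge0 // => i i_s; rewrite mulr_ge0 ?c_ge0 ?ax_ge0.
exists (fun i => if i == i0 then (dot b x - S) / al else c i); split.
  move=> i /mem_cons[->|i_s]; last first.
    by case: (i =P i0) => [ii0 | _]; [move: i0s; rewrite -ii0 i_s | apply: c_ge0].
  by rewrite eqxx -mulrNN -invrN divr_ge0 // oppr_ge0 ltW //; lra.
move=> e; rewrite big_cons eqxx sum_s.
have := b'c e; rewrite /b' /a'.
have -> : \sum_(i <- s) c i * (a i e - dot (a i) x / al * a i0 e) =
          \sum_(i <- s) c i * a i e - S / al * a i0 e.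
  by rewrite /S mulr_suml mulr_suml -sumrB; apply: eq_bigr => i _; ring.
move=> b'E; rewrite -[b e](subrK (dot b x / al * a i0 e)) b'E; ring.
Qed.

End Farkas.

Lemma ler_ratio_nat (R : realFieldType) (a b p q : nat) : (0 < b)%N -> (0 < q)%N ->
  ((a%:R / b%:R : R) <= p%:R / q%:R) = (a * q <= p * b)%N.
Proof.
move=> b_gt0 q_gt0; rewrite ler_pdivrMr ?ltr0n // mulrAC ler_pdivlMr ?ltr0n //.
by rewrite -!natrM ler_nat.
Qed.

Lemma ltr_ratio_nat (R : realFieldType) (a b p q : nat) : (0 < b)%N -> (0 < q)%N ->
  ((a%:R / b%:R : R) < p%:R / q%:R) = (a * q < p * b)%N.
Proof.
move=> b_gt0 q_gt0; rewrite ltr_pdivrMr ?ltr0n // mulrAC ltr_pdivlMr ?ltr0n //.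
by rewrite -!natrM ltr_nat.
Qed.

Section Indicator.
Variables (R : realType) (T : finType) (bases : {set {set T}}).

Lemma sum_indicator (F : {set T} -> R) e :
  \sum_(B in bases | e \in B) F B = \sum_(B in bases) F B * indicator R B e.
Proof.
rewrite big_mkcondr; apply: eq_bigr => B _.
by rewrite /indicator; case: (e \in B); rewrite ?mulr1 ?mulr0.
Qed.

Lemma sum_measure_meet (mu : {set T} -> R) (A : {set T}) :
  \sum_(e in A) \sum_(B in bases | e \in B) mu B = \sum_(B in bases) mu B * #|A :&: B|%:R.
Proof.
under eq_bigr do rewrite big_mkcondr /=.
rewrite exchange_big /=; apply: eq_bigr => B _.
rewrite -big_mkcondr /= (eq_bigl (fun e => e \in A :&: B)); last by move=> e; rewrite inE.
by rewrite sumr_const mulr_natr.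
Qed.

Lemma sum_indicator_set (S B : {set T}) : \sum_(e in S) indicator R B e = #|S :&: B|%:R.
Proof.
have -> : \sum_(e in S) indicator R B e = \sum_(e in S | e \in B) 1.
  by rewrite big_mkcondr; apply: eq_bigr => e _; rewrite /indicator; case: (e \in B).
by rewrite (eq_bigl (fun e => e \in S :&: B)) ?sumr_const // => e; rewrite inE.
Qed.

End Indicator.

Section CardRankCondition.
Variables (R : realType) (T : finType) (bases : {set {set T}}).
Hypotheses (matroid_bases : is_matroid bases) (loopless_bases : loopless bases).
Hypothesis T_gt0 : (0 < #|T|)%N.

Local Notation r := (rank bases [set: T]).
Local Notation n := #|T|.
Local Notation rhoE := (density bases R [set: T]).

Lemma rank_gt0 A : A != set0 -> (0 < rank bases A)%N.
Proof.
case/set0Pn => e eA; have [B Bb eB] := loopless_bases e.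
apply: leq_trans (leq_card_rank _ Bb); rewrite card_gt0.
by apply/set0Pn; exists e; rewrite inE eA.
Qed.

Lemma rankT_gt0 : (0 < r)%N.
Proof. by apply: rank_gt0; apply/set0Pn; have [e _] := card_gt0P T_gt0; exists e. Qed.

Lemma card_basis B : B \in bases -> #|B| = r.
Proof.
by move=> Bb; rewrite -(separator_rank matroid_bases (separatorT matroid_bases) Bb) setIT.
Qed.

Lemma density_leE A : A != set0 ->
  (density bases R A <= rhoE) = (#|A| * r <= n * rank bases A)%N.
Proof. by move=> A0; rewrite /density cardsT ler_ratio_nat ?rankT_gt0 ?rank_gt0. Qed.

Lemma density_ltE A : A != set0 ->
  (density bases R A < rhoE) = (#|A| * r < n * rank bases A)%N.
Proof. by move=> A0; rewrite /density cardsT ltr_ratio_nat ?rankT_gt0 ?rank_gt0. Qed.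

Definition card_rank_condition : Prop :=
  forall A : {set T}, (#|A| * r <= n * rank bases A)%N /\
            ((#|A| * r)%N = (n * rank bases A)%N -> separator bases A).

Lemma density_conditionP :
  (forall A : {set T}, A != set0 ->
     density bases R A <= rhoE /\
     (~ union_of_components bases A -> density bases R A < rhoE))
  <-> card_rank_condition.
Proof.
split=> [dens A | card_rank A A0].
  have [-> | A0] := eqVneq A set0; first by rewrite cards0; split=> // _; exact: separator0.
  have [le_dens lt_dens] := dens A A0; rewrite -density_leE //; split=> // tightA.
  apply/(separator_components matroid_bases); apply: NNPP => /lt_dens.
  by rewrite density_ltE // tightA ltnn.
have [le_card tight_sep] := card_rank A; rewrite density_leE //; split=> // nU.
rewrite density_ltE // ltn_neqAle le_card andbT; apply/eqP => /tight_sep.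
by move/(separator_components matroid_bases).
Qed.

End CardRankCondition.

Section UniformMeasure.
Variables (R : realType) (T : finType) (bases : {set {set T}}).
Hypothesis matroid_bases : is_matroid bases.
Hypothesis T_gt0 : (0 < #|T|)%N.

Local Notation r := (rank bases [set: T]).
Local Notation n := #|T|.
Local Notation mass mu e := (\sum_(B in bases | e \in B) mu B).

Lemma card_mass (mu : {set T} -> R) e0 : (forall e, mass mu e = mass mu e0) ->
  forall A : {set T}, \sum_(B in bases) mu B * #|A :&: B|%:R = #|A|%:R * mass mu e0.
Proof.
move=> mu_unif A; rewrite -sum_measure_meet.
by under eq_bigr do rewrite mu_unif; rewrite sumr_const mulr_natl.
Qed.

Lemma uniform_mass (mu : {set T} -> R) e0 : (forall e, mass mu e = mass mu e0) ->
  n%:R * mass mu e0 = r%:R * \sum_(B in bases) mu B.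
Proof.
move=> mu_unif; rewrite -cardsT -card_mass // mulr_sumr; apply: eq_bigr => B Bb.
by rewrite setTI (card_basis matroid_bases Bb) mulrC.
Qed.

Lemma measure_total_gt0 (mu : {set T} -> R) :
  (forall B, B \in bases -> 0 < mu B) -> 0 < \sum_(B in bases) mu B.
Proof.
move=> mu_gt0; have [B0 B0b] := exists_basis matroid_bases.
by rewrite (bigD1 B0) //= ltr_pwDl ?mu_gt0 // sumr_ge0 // => B /andP[Bb _]; rewrite ltW ?mu_gt0.
Qed.

Lemma uniform_measure_card_rank : uniform_positive_measure bases R ->
  card_rank_condition bases.
Proof.
case=> mu [mu_gt0 mu_unif] A; have [e0 _] := card_gt0P T_gt0.
set c := mass mu e0; set Z := \sum_(B in bases) mu B.
have Z_gt0 : 0 < Z := measure_total_gt0 mu_gt0.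
have slack_ge0 B : B \in bases -> 0 <= mu B * ((rank bases A)%:R - #|A :&: B|%:R).
  move=> Bb; apply: mulr_ge0; first exact/ltW/mu_gt0.
  by rewrite subr_ge0 ler_nat leq_card_rank.
pose slack := \sum_(B in bases) mu B * ((rank bases A)%:R - #|A :&: B|%:R).
have gapE : ((n * rank bases A)%:R - (#|A| * r)%:R) * Z = n%:R * slack.
  have -> : slack = (rank bases A)%:R * Z - #|A|%:R * c.
    rewrite -(card_mass (fun e => mu_unif e e0)) /slack /Z mulr_sumr -sumrB.
    by apply: eq_bigr => B _; ring.
  have -> : n%:R * ((rank bases A)%:R * Z - #|A|%:R * c) =
      (n * rank bases A)%:R * Z - #|A|%:R * (n%:R * c) by rewrite natrM; ring.
  by rewrite /c (uniform_mass (fun e => mu_unif e e0)) -/Z natrM; ring.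
have slack_sum_ge0 : 0 <= slack by rewrite sumr_ge0.
split.
  have : 0 <= ((n * rank bases A)%:R - (#|A| * r)%:R) * Z by rewrite gapE mulr_ge0.
  by rewrite pmulr_lge0 // subr_ge0 ler_nat.
move=> tightA; apply/separatorP => B1 B2 B1b B2b.
have slack0 : slack = 0.
  have /eqP : n%:R * slack = 0 by rewrite -gapE tightA subrr mul0r.
  by rewrite mulf_eq0 pnatr_eq0 eqn0Ngt T_gt0 => /eqP.
have tight B : B \in bases -> #|B :&: A| = rank bases A.
  move=> Bb; have /eqP := psumr_eq0P slack_ge0 slack0 Bb.
  by rewrite mulf_eq0 gt_eqF ?mu_gt0 //= subr_eq0 eqr_nat setIC => /eqP.
by rewrite !tight.
Qed.

Definition centered_indicator (B : {set T}) (e : T) : R :=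
  n%:R * indicator R B e - r%:R.

Lemma sum_centered_indicator (S B : {set T}) :
  \sum_(e in S) centered_indicator B e = n%:R * #|S :&: B|%:R - r%:R * #|S|%:R.
Proof.
by rewrite sumrB -mulr_sumr sum_indicator_set sumr_const; congr (_ - _); rewrite mulr_natr.
Qed.

Lemma sum_centered_indicatorT B : B \in bases -> \sum_e centered_indicator B e = 0.
Proof.
move=> Bb; rewrite (eq_bigl (fun e => e \in [set: T])) => [|e]; last by rewrite inE.
by rewrite sum_centered_indicator setTI (card_basis matroid_bases Bb) cardsT mulrC subrr.
Qed.

Lemma balanced_uniform (mu : {set T} -> R) :
  (forall e, \sum_(B in bases) mu B * centered_indicator B e = 0) ->
  forall e f, mass mu e = mass mu f.
Proof.
have massE e : \sum_(B in bases) mu B * centered_indicator B e =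
    n%:R * mass mu e - r%:R * \sum_(B in bases) mu B.
  rewrite sum_indicator mulr_sumr mulr_sumr -sumrB; apply: eq_bigr => B _.
  by rewrite /centered_indicator; ring.
move=> balanced e f; apply: (mulfI (_ : n%:R != 0)); first by rewrite pnatr_eq0 -lt0n.
have nmass g : n%:R * mass mu g = r%:R * \sum_(B in bases) mu B.
  by apply/eqP; rewrite -subr_eq0 -massE balanced.
by rewrite !nmass.
Qed.

Section CardRankToMeasure.
Hypothesis card_rank : card_rank_condition bases.

Lemma centered_dot_le0 (w : T -> R) B0 : B0 \in bases ->
  (forall B, B \in bases -> 0 <= dot (centered_indicator B) w) ->
  dot (centered_indicator B0) w <= 0.
Proof.
move=> B0b dot_ge0; have [Bs Bsb greedyBs] := greedy_basis matroid_bases w.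
have prefixE B f : \sum_(e | w e <= w f) centered_indicator B e =
    n%:R * #|[set e | w e <= w f] :&: B|%:R - r%:R * #|[set e | w e <= w f]|%:R.
  by rewrite -sum_centered_indicator; apply: eq_bigl => e; rewrite inE.
have Bs_prefix f : \sum_(e | w e <= w f) centered_indicator Bs e =
    (n * rank bases [set e | w e <= w f])%:R - (#|[set e | w e <= w f]| * r)%:R.
  by rewrite prefixE greedyBs !natrM [r%:R * _]mulrC.
have Bs_prefix_ge0 f : 0 <= \sum_(e | w e <= w f) centered_indicator Bs e.
  by rewrite Bs_prefix subr_ge0 ler_nat; case: (card_rank [set e | w e <= w f]).
have [Bs_le0 Bs_prefix0] := abel_summation (sum_centered_indicatorT Bsb) Bs_prefix_ge0.
have tight f : separator bases [set e | w e <= w f].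
  case: (card_rank [set e | w e <= w f]) => _; apply; apply/eqP.
  rewrite eq_sym -(eqr_nat R) -subr_eq0 -Bs_prefix Bs_prefix0 //.
  by apply/eqP; rewrite eq_le Bs_le0; apply: dot_ge0.
have B0_prefix_ge0 f : 0 <= \sum_(e | w e <= w f) centered_indicator B0 e.
  rewrite prefixE setIC (separator_rank matroid_bases (tight f) B0b) -greedyBs -prefixE.
  exact: Bs_prefix_ge0.
by have [] := abel_summation (sum_centered_indicatorT B0b) B0_prefix_ge0.
Qed.

Lemma balanced_combination_at B0 : B0 \in bases -> exists lam : {set T} -> R,
  [/\ forall B, B \in bases -> 0 <= lam B, 0 < lam B0 &
      forall e, \sum_(B in bases) lam B * centered_indicator B e = 0].
Proof.
move=> B0b; have := farkas_lemma centered_indicator (fun e => - centered_indicator B0 e)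
  (enum_uniq (mem bases)).
case=> [[w [w_ge0 w_lt0]] | [c [c_ge0 cE]]].
  have : dot (centered_indicator B0) w <= 0.
    by apply: centered_dot_le0 => // B Bb; apply: w_ge0; rewrite mem_enum.
  have dotN : dot (fun e => - centered_indicator B0 e) w = - dot (centered_indicator B0) w.
    by rewrite /dot -sumrN; apply: eq_bigr => e _; rewrite mulNr.
  by move: w_lt0; rewrite dotN oppr_lt0 => /lt_geF ->.
exists (fun B => c B + (B == B0)%:R); split.
- by move=> B Bb; rewrite addr_ge0 ?c_ge0 ?mem_enum.
- by rewrite eqxx ltr_wpDl ?c_ge0 ?mem_enum.
move=> e; under eq_bigr do rewrite mulrDl.
rewrite big_split /= -big_enum /= -cE (bigD1 B0) //= eqxx mul1r big1 ?addr0 ?addNr //.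
by move=> B /andP[_ /negbTE ->]; rewrite mul0r.
Qed.

Lemma positive_balanced_combination : exists mu : {set T} -> R,
  (forall B, B \in bases -> 0 < mu B) /\
  forall e, \sum_(B in bases) mu B * centered_indicator B e = 0.
Proof.
have /fin_all_exists[lam lamP] : forall B0 : {set T}, exists l : {set T} -> R,
    B0 \in bases -> [/\ forall B, B \in bases -> 0 <= l B, 0 < l B0 &
        forall e, \sum_(B in bases) l B * centered_indicator B e = 0].
  move=> B0; case: (boolP (B0 \in bases)) => [/balanced_combination_at[l lP] | _].
    by exists l.
  by exists (fun _ => 0).
exists (fun B => \sum_(B0 in bases) lam B0 B); split.
  move=> B Bb; have [_ lamBB _] := lamP B Bb.
  rewrite (bigD1 B) //= ltr_pwDl // sumr_ge0 // => B0 /andP[B0b _].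
  by have [->] := lamP B0 B0b.
move=> e; under eq_bigr do rewrite mulr_suml.
rewrite exchange_big /= big1 // => B0 B0b.
by have [_ _ ->] := lamP B0 B0b.
Qed.

End CardRankToMeasure.

Lemma card_rank_conditionP :
  card_rank_condition bases <-> uniform_positive_measure bases R.
Proof.
split=> [card_rank | ]; last exact: uniform_measure_card_rank.
have [mu [mu_gt0 balanced]] := positive_balanced_combination card_rank.
by exists mu; split=> //; apply: balanced_uniform.
Qed.

End UniformMeasure.

Lemma norm_mulmx_row_le (R : realFieldType) (p k : nat) (P : 'M[R]_(p, k))
    (u : 'rV[R]_p) (eps : R) i :
  (forall j, `|u 0 j| <= eps) -> `|(u *m P) 0 i| <= eps * \sum_j \sum_i' `|P j i'|.
Proof.
move=> u_le; rewrite mxE (le_trans (ler_norm_sum _ _ _)) // mulr_sumr ler_sum // => j _.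
rewrite normrM; apply: ler_pM; [exact: normr_ge0 | exact: normr_ge0 | exact: u_le | ].
by rewrite (bigD1 i) //= lerDl sumr_ge0.
Qed.

Lemma row_cone_interior (R : realFieldType) (k p : nat) (A : 'M[R]_(k, p)) (lam : 'rV[R]_k) :
  (forall i, 0 < lam 0 i) -> exists2 eps : R, 0 < eps &
  forall u : 'rV[R]_p, (u <= A)%MS -> (forall j, `|u 0 j| < eps) ->
  exists2 mu : 'rV[R]_k, (forall i, 0 <= mu 0 i) & mu *m A = lam *m A + u.
Proof.
move=> lam_gt0.
have [m m_gt0 m_le] : exists2 m : R, 0 < m & forall i, m <= lam 0 i.
  case: k A lam lam_gt0 => [|k'] _ lam lam_gt0; first by exists 1 => // -[].
  have [i0 _ min_i0] := @arg_minP _ _ _ ord0 xpredT (fun i => lam 0 i) isT.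
  by exists (lam 0 i0) => // i; apply: min_i0.
pose C := \sum_j \sum_i `|pinvmx A j i|.
have C_ge0 : 0 <= C by rewrite sumr_ge0 // => j _; rewrite sumr_ge0.
have C1_gt0 : 0 < C + 1 by rewrite ltr_wpDl.
exists (m / (C + 1)); first by rewrite divr_gt0.
move=> u uA u_lt; exists (lam + u *m pinvmx A); last by rewrite mulmxDl mulmxKpV.
move=> i; rewrite mxE.
have := norm_mulmx_row_le (pinvmx A) i (fun j => ltW (u_lt j)); rewrite -/C.
have : m / (C + 1) * C <= m.
  by rewrite mulrAC ler_pdivrMr // ler_pM2l // lerDl ler01.
rewrite ler_norml; have := m_le i; lra.
Qed.

Section BasePolytope.
Variables (R : realType) (T : finType) (bases : {set {set T}}).
Hypothesis matroid_bases : is_matroid bases.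

Local Notation ind := (indicator R).

Definition positive_combination (x : T -> R) : Prop :=
  exists lam : {set T} -> R,
    [/\ forall B, B \in bases -> 0 < lam B, \sum_(B in bases) lam B = 1
      & forall e, x e = \sum_(B in bases) lam B * ind B e].

Definition coef_row (lam : {set T} -> R) : 'rV[R]_#|bases| := \row_i lam (enum_val i).

(* Rows are the indicator vectors of the bases, extended by a coordinate 1 that
   records the total weight of a combination. *)
Definition bases_mx : 'M[R]_(#|bases|, #|T| + 1) :=
  row_mx (\matrix_(i, j) ind (enum_val i) (enum_val j)) (const_mx 1).

Lemma coef_row_mul lam : coef_row lam *m bases_mx =
  row_mx (\row_j \sum_(B in bases) lam B * ind B (enum_val j))
         (const_mx (\sum_(B in bases) lam B)).
Proof.
rewrite mul_mx_row; congr row_mx; apply/rowP => j; rewrite !mxE [RHS]big_enum_val /=.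
  by apply: eq_bigr => i _; rewrite !mxE.
by apply: eq_bigr => i _; rewrite !mxE mulr1.
Qed.

Lemma positive_combination_rel_interior x :
  positive_combination x -> in_rel_interior bases x.
Proof.
case=> lam [lam_gt0 lam1 xE]; split; first by exists lam; split=> // B Bb; apply/ltW/lam_gt0.
have [|eps eps_gt0 cone] := row_cone_interior bases_mx (lam := coef_row lam).
  by move=> i; rewrite mxE lam_gt0 ?enum_valP.
exists eps => // y [kap [kap1 yE]] y_near.
have [B0 B0b] := exists_basis matroid_bases.
pose u := coef_row kap *m bases_mx - coef_row lam *m bases_mx.
have [|j|mu mu_ge0 muE] := cone u.
- by rewrite /u -mulmxBl submxMl.
- rewrite /u !coef_row_mul opp_row_mx add_row_mx mxE.
  case: split => j'; rewrite !mxE ?kap1 ?lam1 ?subrr ?normr0 //.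
  by rewrite -yE -xE.
pose lam' B := mu 0 (enum_rank_in B0b B).
have mu_row : mu = coef_row lam' by apply/rowP => i; rewrite !mxE /lam' enum_valK_in.
move: muE; rewrite /u addrC subrK mu_row !coef_row_mul => /eq_row_mx[/rowP indE /rowP sumE].
exists lam'; split.
- by move=> B Bb; rewrite /lam' mu_ge0.
- by have := sumE 0; rewrite !mxE kap1.
- by move=> e; have := indE (enum_rank e); rewrite !mxE enum_rankK yE.
Qed.

Lemma convex_indicator_01 (lam : {set T} -> R) e :
  (forall B, B \in bases -> 0 <= lam B) -> \sum_(B in bases) lam B = 1 ->
  0 <= \sum_(B in bases) lam B * ind B e <= 1.
Proof.
move=> lam_ge0 lam1; have ind01 B : 0 <= ind B e <= 1.
  by rewrite /indicator; case: (e \in B); rewrite /= ?mulr1n ?mulr0n ?lexx ?ler01.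
rewrite sumr_ge0 => [|B Bb]; last by case/andP: (ind01 B) => ind0 _; rewrite mulr_ge0 ?lam_ge0.
rewrite -lam1 ler_sum // => B Bb; case/andP: (ind01 B) => ind0 ind1.
by rewrite ler_piMr ?lam_ge0.
Qed.

(* Pushing [x] slightly away from the barycenter of all bases stays in P(M);
   averaging back with the barycenter gives every basis a positive weight. *)
Lemma rel_interior_positive_combination x :
  in_rel_interior bases x -> positive_combination x.
Proof.
case=> -[lam [lam_ge0 lam1 xE]] [eps eps_gt0 near_in].
have [B0 B0b] := exists_basis matroid_bases.
pose N : R := #|bases|%:R.
have N_gt0 : 0 < N by rewrite ltr0n; apply/card_gt0P; exists B0.
pose t := eps / 2; have t_gt0 : 0 < t by rewrite divr_gt0.
pose bary e := \sum_(B in bases) N^-1 * ind B e.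
have bary1 : \sum_(B in bases) N^-1 = 1 by rewrite sumr_const -mulr_natr mulVf ?gt_eqF.
pose y e := (1 + t) * x e - t * bary e.
have [kap [kap_ge0 kap1 yE]] : in_base_polytope bases y.
  apply: near_in => [|e].
    exists (fun B => (1 + t) * lam B - t * N^-1); split.
      by rewrite sumrB -!mulr_sumr lam1 bary1 !mulr1 addrK.
    by move=> e; rewrite /y /bary xE !mulr_sumr -sumrB; apply: eq_bigr => B _; ring.
  have -> : y e - x e = t * (x e - bary e) by rewrite /y; ring.
  have /andP[x0 x1] := convex_indicator_01 e lam_ge0 lam1; rewrite -xE in x0 x1.
  have /andP[b0 b1] : 0 <= bary e <= 1.
    by apply: convex_indicator_01 => // B _; rewrite invr_ge0 ltW.
  have : `|x e - bary e| <= 1 by rewrite ler_norml; apply/andP; split; lra.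
  rewrite normrM gtr0_norm // /t => le1; nra.
exists (fun B => (kap B + t * N^-1) / (1 + t)); split.
- by move=> B Bb; rewrite divr_gt0 ?ltr_wpDl ?kap_ge0 ?mulr_gt0 ?invr_gt0 //; lra.
- rewrite -mulr_suml big_split /= kap1 -mulr_sumr bary1 mulr1 divff //.
  by rewrite gt_eqF //; lra.
- move=> e; rewrite (eq_bigr (fun B => (kap B * ind B e + t * (N^-1 * ind B e)) / (1 + t))).
    rewrite -mulr_suml big_split /= -yE -mulr_sumr -/(bary e) /y.
    by apply: (canRL (mulfK _)); [rewrite gt_eqF //; lra | ring].
  by move=> B _; ring.
Qed.

End BasePolytope.

Lemma rel_interiorP (R : realType) (T : finType) (bases : {set {set T}}) (x : T -> R) :
  is_matroid bases -> in_rel_interior bases x <-> positive_combination bases x.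
Proof.
move=> matroid_bases; split; first exact: rel_interior_positive_combination.
exact: positive_combination_rel_interior.
Qed.

Section ConstantPoint.
Variables (R : realType) (T : finType) (bases : {set {set T}}).
Hypothesis matroid_bases : is_matroid bases.
Hypothesis T_gt0 : (0 < #|T|)%N.

Lemma uniform_measure_positive_combination :
  uniform_positive_measure bases R <->
  positive_combination bases (fun _ : T => (density bases R [set: T])^-1).
Proof.
split=> [[mu [mu_gt0 mu_unif]] | [lam [lam_gt0 lam1 lamE]]]; last first.
  by exists lam; split=> // e f; rewrite !sum_indicator -!lamE.
have Z_gt0 := measure_total_gt0 matroid_bases mu_gt0.
exists (fun B => mu B / \sum_(B in bases) mu B); split.
- by move=> B Bb; rewrite divr_gt0 ?mu_gt0.
- by rewrite -mulr_suml divff ?gt_eqF.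
move=> e; rewrite (eq_bigr (fun B => mu B * indicator R B e / \sum_(B in bases) mu B)).
  rewrite -mulr_suml -sum_indicator /density cardsT invf_div; apply/eqP.
  rewrite eqr_div ?lt0r_neq0 ?ltr0n //.
  by rewrite -(uniform_mass matroid_bases (fun g => mu_unif g e)) mulrC.
by move=> B _; rewrite mulrAC.
Qed.

End ConstantPoint.

Theorem theorem2p10 (R : realType) (T : finType) (bases : {set {set T}}) :
  is_matroid bases -> loopless bases -> (0 < #|T|)%N ->
  let rhoE : R := density bases R [set: T] in
  [/\ in_rel_interior bases (fun _ : T => rhoE^-1) <->
        (forall A : {set T}, A != set0 ->
           density bases R A <= rhoE /\
           (~ union_of_components bases A -> density bases R A < rhoE)),
      in_rel_interior bases (fun _ : T => rhoE^-1) <-> uniform_positive_measure bases R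
    & (forall A : {set T}, A != set0 ->
           density bases R A <= rhoE /\
           (~ union_of_components bases A -> density bases R A < rhoE))
      <-> uniform_positive_measure bases R].
Proof.
move=> matroid_bases loopless_bases T_gt0 rhoE.
have interior_measure :
    in_rel_interior bases (fun _ : T => rhoE^-1) <-> uniform_positive_measure bases R.
  apply: iff_trans (rel_interiorP _ matroid_bases) _.
  exact: iff_sym (uniform_measure_positive_combination R matroid_bases T_gt0).
have density_measure := iff_trans (density_conditionP R matroid_bases loopless_bases T_gt0)
  (card_rank_conditionP R matroid_bases T_gt0).
by split=> //; apply: iff_trans interior_measure (iff_sym density_measure).
Qed.
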